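(* Let $0<\delta<\tfrac12$, $|\nu|<1-2\delta$, $|\mu|<1$, and let $m\ge1$. Set $\delta_1=\frac{2\delta}{1+\nu}$ and $\delta_4=\frac{2\delta}{1-\nu}$. Then $$\frac{1}{|\log(1-\delta)|}>\frac{1}{|\log(1-\delta_1)|}+\frac{1}{|\log(1-\delta_4)|},$$ and consequently $$\frac{\log\big[\frac m2(1+\mu)\big]}{|\log(1-\delta_1)|}+\frac{\log\big[\frac m2(1-\mu)\big]}{|\log(1-\delta_4)|}<\frac{\log m}{|\log(1-\delta)|}.$$
   Context: $\log$ is the natural logarithm. The left-hand side of the second inequality is the sum of the bounds $\log(\#\text{rows})/|\log(1-\text{density})|$ applied separately to the two diagonal blocks of a perfectly block-diagonal $0$-$1$ matrix whose diagonal blocks have $\frac m2(1\pm\mu)$ rows, $\frac n2(1\pm\nu)$ columns and row densities $\delta_1,\delta_4$, while the right-hand side is the same bound for the whole matrix with density $\delta$. *)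

From Stdlib Require Export Reals.
Open Scope R_scope.

(* For 0 < x < 1 the quantity 1/|log(1 - x)| = 1/log(1/(1 - x)) is squeezed between
   1/x - 1 and 1/x - 1/2, by the bounds 2(t - 1)/(t + 1) < log t < t - 1 for t > 1.
   Since 1/delta1 + 1/delta4 = 1/delta, the upper bounds for delta1 and delta4 add up to
   1/delta - 1, the lower bound for delta, which gives the first inequality.  For the
   second, log(m(1 ± mu)/2) = log m + log((1 ± mu)/2) with a negative second term, and
   log m >= 0 is then weighted by less on the left than on the right. *)
From Stdlib Require Import Reals Lra.
From Coquelicot Require Import Coquelicot.
Open Scope R_scope.

Lemma ln_lt_sub1 (t : R) : 1 < t -> ln t < t - 1.
Proof.
  intro Ht. rewrite <- (ln_exp (t - 1)).
  apply ln_increasing; [lra|].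
  pose proof (exp_ineq1 (t - 1)). lra.
Qed.

Lemma pade_lt_ln (t : R) : 1 < t -> 2 * (t - 1) / (t + 1) < ln t.
Proof.
  intro Ht.
  destruct (MVT_cor2 (fun u => ln u - 2 * (u - 1) / (u + 1))
    (fun u => / u - 4 / (u + 1) ^ 2) 1 t Ht) as [c [Hmvt Hc]].
  { intros u Hu. apply is_derive_Reals. auto_derive.
    - repeat split; try intro; lra.
    - field. lra. }
  assert (Hderiv_pos : 0 < / c - 4 / (c + 1) ^ 2).
  { replace (/ c - 4 / (c + 1) ^ 2) with ((c - 1) ^ 2 / (c * (c + 1) ^ 2)) by (field; lra).
    apply Rdiv_lt_0_compat; [nra|]. apply Rmult_lt_0_compat; nra. }
  assert (0 < (/ c - 4 / (c + 1) ^ 2) * (t - 1)) by nra.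
  rewrite ln_1 in Hmvt.
  replace (2 * (1 - 1) / (1 + 1)) with 0 in Hmvt by field. lra.
Qed.

Lemma one_lt_inv_1m (x : R) : 0 < x < 1 -> 1 < / (1 - x).
Proof.
  intro Hx. rewrite <- Rinv_1. apply Rinv_lt_contravar; lra.
Qed.

Lemma abs_ln_1m (x : R) : 0 < x < 1 -> Rabs (ln (1 - x)) = ln (/ (1 - x)).
Proof.
  intro Hx. rewrite ln_Rinv by lra.
  apply Rabs_left. rewrite <- ln_1. apply ln_increasing; lra.
Qed.

Lemma abs_ln_1m_gt0 (x : R) : 0 < x < 1 -> 0 < Rabs (ln (1 - x)).
Proof.
  intro Hx. apply Rabs_pos_lt, ln_neq_0; lra.
Qed.

Lemma inv_abs_ln_1m_gt (x : R) : 0 < x < 1 -> / x - 1 < 1 / Rabs (ln (1 - x)).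
Proof.
  intro Hx. rewrite abs_ln_1m by exact Hx.
  pose proof (one_lt_inv_1m x Hx) as Ht.
  pose proof (ln_lt_sub1 _ Ht) as Hub.
  replace (/ (1 - x) - 1) with (x / (1 - x)) in Hub by (field; lra).
  replace (/ x - 1) with (/ (x / (1 - x))) by (field; lra).
  assert (0 < ln (/ (1 - x))) by (rewrite <- ln_1; apply ln_increasing; lra).
  rewrite Rdiv_1_l. apply Rinv_lt_contravar; [|exact Hub].
  apply Rmult_lt_0_compat; [|apply Rdiv_lt_0_compat]; lra.
Qed.

Lemma inv_abs_ln_1m_lt (x : R) : 0 < x < 1 -> 1 / Rabs (ln (1 - x)) < / x - / 2.
Proof.
  intro Hx. rewrite abs_ln_1m by exact Hx.
  pose proof (one_lt_inv_1m x Hx) as Ht.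
  pose proof (pade_lt_ln _ Ht) as Hlb.
  replace (2 * (/ (1 - x) - 1) / (/ (1 - x) + 1)) with (2 * x / (2 - x)) in Hlb
    by (field; lra).
  replace (/ x - / 2) with (/ (2 * x / (2 - x))) by (field; lra).
  rewrite Rdiv_1_l. apply Rinv_lt_contravar; [|exact Hlb].
  assert (0 < 2 * x / (2 - x)) by (apply Rdiv_lt_0_compat; lra).
  apply Rmult_lt_0_compat; lra.
Qed.

Lemma inv_abs_ln_1m_harmonic_split (x y z : R) :
  0 < x < 1 -> 0 < y < 1 -> 0 < z < 1 -> / x + / y = / z ->
  1 / Rabs (ln (1 - x)) + 1 / Rabs (ln (1 - y)) < 1 / Rabs (ln (1 - z)).
Proof.
  intros Hx Hy Hz Hxyz.
  pose proof (inv_abs_ln_1m_lt x Hx). pose proof (inv_abs_ln_1m_lt y Hy).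
  pose proof (inv_abs_ln_1m_gt z Hz). lra.
Qed.

Lemma ln_scaled_weighted_lt (M a b p q r : R) :
  1 <= M -> 0 < a < 1 -> 0 < b < 1 -> 0 < p -> 0 < q -> 0 < r ->
  1 / p + 1 / q < 1 / r ->
  ln (M * a) / p + ln (M * b) / q < ln M / r.
Proof.
  intros HM Ha Hb Hp Hq Hr Hw.
  assert (HlnM : 0 <= ln M) by (rewrite <- ln_1; apply ln_le; lra).
  assert (Hlna : ln a < 0) by (rewrite <- ln_1; apply ln_increasing; lra).
  assert (Hlnb : ln b < 0) by (rewrite <- ln_1; apply ln_increasing; lra).
  rewrite !ln_mult by lra.
  assert (ln a / p < 0) by (apply Rdiv_neg_pos; lra).
  assert (ln b / q < 0) by (apply Rdiv_neg_pos; lra).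
  assert (ln M * (1 / p + 1 / q) <= ln M * (1 / r)) by (apply Rmult_le_compat_l; lra).
  unfold Rdiv in *. lra.
Qed.

Theorem mainTheorem7 (delta nu mu : R) (m : nat) :
  0 < delta -> delta < 1 / 2 ->
  Rabs nu < 1 - 2 * delta ->
  Rabs mu < 1 ->
  (1 <= m)%nat ->
  let delta1 := 2 * delta / (1 + nu) in
  let delta4 := 2 * delta / (1 - nu) in
  1 / Rabs (ln (1 - delta)) > 1 / Rabs (ln (1 - delta1)) + 1 / Rabs (ln (1 - delta4))
  /\
  ln (INR m / 2 * (1 + mu)) / Rabs (ln (1 - delta1))
    + ln (INR m / 2 * (1 - mu)) / Rabs (ln (1 - delta4))
    < ln (INR m) / Rabs (ln (1 - delta)).
Proof.
  intros Hd0 Hd1 Hnu Hmu Hm delta1 delta4.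
  apply Rabs_def2 in Hnu. apply Rabs_def2 in Hmu.
  assert (Hdelta : 0 < delta < 1) by lra.
  assert (Hdelta1 : 0 < delta1 < 1).
  { unfold delta1, delta4; split; [apply Rdiv_lt_0_compat | apply Rlt_div_l]; lra. }
  assert (Hdelta4 : 0 < delta4 < 1).
  { unfold delta1, delta4; split; [apply Rdiv_lt_0_compat | apply Rlt_div_l]; lra. }
  assert (Hsplit : / delta1 + / delta4 = / delta) by (unfold delta1, delta4; field; lra).
  pose proof (inv_abs_ln_1m_harmonic_split _ _ _ Hdelta1 Hdelta4 Hdelta Hsplit) as Hweights.
  split; [exact Hweights|].
  replace (INR m / 2 * (1 + mu)) with (INR m * ((1 + mu) / 2)) by field.
  replace (INR m / 2 * (1 - mu)) with (INR m * ((1 - mu) / 2)) by field.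
  apply ln_scaled_weighted_lt; try apply abs_ln_1m_gt0; try lra.
  apply (le_INR 1). exact Hm.
Qed.
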